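(* Let $\mathbf m\ge 0$ be a multi-index such that $\mu_{\mathbf k}<0$ for all $\mathbf k\notin F_{\mathbf m}$, and suppose $\mu_*:=\max_{\mathbf k\notin F_{\mathbf m}}\mu_{\mathbf k}$ exists. Let $\gamma\in[0,1)$ (with $\gamma\in(0,1)$ if $q=2$; $\gamma=0$ is allowed if $q=0$). Assume: (i) there is $W_{m,q}>0$ with $\sup_{(t,s)\in\mathcal S_J}\|\bar U^{(\mathbf m)}(t,s)\mathcal Q\psi^{(\mathbf m)}\|_\omega\le W_{m,q}\|\psi^{(\mathbf m)}\|_\omega$ for all $\psi\in\ell^1_\omega$; (ii) there is a function $W^{(\infty)}_q:\mathcal S_J\to[0,\infty)$ with $\|\bar U^{(\infty)}(t,s)\mathcal Q\psi^{(\infty)}\|_\omega\le W^{(\infty)}_q(t,s)\|\psi^{(\infty)}\|_\omega$ for all $(t,s)\in\mathcal S_J$, $\psi\in\ell^1_\omega$; (iii) there are constants $W_{\infty,q}>0$, $\overline W_{\infty,q}\ge0$, $\overline{\overline W}_{\infty,q}\ge0$ with $\sup_{(t,s)\in\mathcal S_J}(t-s)^\gamma W^{(\infty)}_q(t,s)\le W_{\infty,q}$, $\sup_{(t,s)\in\mathcal S_J}(t-s)^\gamma\int_s^tW^{(\infty)}_q(r,s)\,dr\le\overline W_{\infty,q}$ and $\sup_{(t,s)\in\mathcal S_J}(t-s)^\gamma\int_s^tW^{(\infty)}_q(t,r)\,dr\le\overline W_{\infty,q}$, $\sup_{(t,s)\in\mathcal S_J}(t-s)^\gamma\int_s^t\int_s^rW^{(\infty)}_q(r,\sigma)(\sigma-s)^{-\gamma}d\sigma\,dr\le\overline{\overline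 W}_{\infty,q}$ and $\sup_{(t,s)\in\mathcal S_J}(t-s)^\gamma\int_s^tW^{(\infty)}_q(t,r)\int_s^r(\sigma-s)^{-\gamma}d\sigma\,dr\le\overline{\overline W}_{\infty,q}$; (iv) there are constants $\mathcal E_{m,\infty},\mathcal E_{\infty,m}\ge0$ with $\sup_{t\in J}\|\Pi^{(\mathbf m)}D\mathcal N(\bar a(t))(I-\Pi^{(\mathbf m)})\|_{B(\ell^1_\omega)}\le\mathcal E_{m,\infty}$ and $\sup_{t\in J}\|(I-\Pi^{(\mathbf m)})D\mathcal N(\bar a(t))\Pi^{(\mathbf m)}\|_{B(\ell^1_\omega)}\le\mathcal E_{\infty,m}$; (v) for every $s\in[0,\tau)$ and $\psi\in\ell^1_\omega$, the function $b(t)=U(t,s)\mathcal Q\psi$, $t\in(s,\tau]$, is a continuous $\ell^1_\omega$-valued function with $\sup_{t\in(s,\tau]}(t-s)^\gamma\|b(t)\|_\omega<\infty$, whose parts $b^{(\mathbf m)}=\Pi^{(\mathbf m)}b$, $b^{(\infty)}=(I-\Pi^{(\mathbf m)})b$ satisfy, for $t\in(s,\tau]$, $b^{(\mathbf m)}(t)=\bar U^{(\mathbf m)}(t,s)\mathcal Q\psi^{(\mathbf m)}+\int_s^t\bar U^{(\mathbf m)}(t,r)\Pi^{(\mathbf m)}\mathcal QD\mathcal N(\bar a(r))b^{(\infty)}(r)\,dr$, $b^{(\infty)}(t)=\bar U^{(\infty)}(t,s)\mathcal Q\psi^{(\infty)}+\int_s^t\bar U^{(\infty)}(t,r)(I-\Pi^{(\mathbf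 m)})\mathcal QD\mathcal N(\bar a(r))b^{(\mathbf m)}(r)\,dr$. If $\kappa:=1-W_{m,q}\overline{\overline W}_{\infty,q}\mathcal E_{m,\infty}\mathcal E_{\infty,m}>0$, then for all $(t,s)\in\mathcal S_J$ and $\psi\in\ell^1_\omega$, $(t-s)^\gamma\|U(t,s)\mathcal Q\psi\|_\omega\le \mathbf W_q\|\psi\|_\omega$, where $\mathbf W_q:=\kappa^{-1}\left\|\begin{pmatrix}\tau^\gamma W_{m,q}& W_{m,q}\overline W_{\infty,q}\mathcal E_{m,\infty}\\ W_{m,q}\overline W_{\infty,q}\mathcal E_{\infty,m}&W_{\infty,q}\end{pmatrix}\right\|_1$ and $\|\cdot\|_1$ is the matrix $1$-norm (maximum absolute column sum).
   Context: Standing setting. Fix $d\ge1$ and $L_1,\dots,L_d>0$. Multi-indices are $\mathbf k=(k_1,\dots,k_d)\in\mathbb Z_{\ge0}^d$; inequalities between multi-indices are componentwise. For $\mathbf m=(m_1,\dots,m_d)$ let $F_{\mathbf m}=\{\mathbf k\ge0:\mathbf k<\mathbf m\}$. Let $\alpha_{\mathbf k}=2^{\delta_{k_1,0}}\cdots2^{\delta_{k_d,0}}$ ($\delta$ the Kronecker delta), fix $\nu_F\ge1$, and set $\omega_{\mathbf k}=\alpha_{\mathbf k}\nu_F^{k_1+\cdots+k_d}$. $\ell^1_\omega$ is the Banach space of real sequences $a=(a_{\mathbf k})_{\mathbf k\ge0}$ with $\|a\|_\omega=\sum_{\mathbf k\ge0}|a_{\mathbf k}|\omega_{\mathbf k}<\infty$;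 $B(\ell^1_\omega)$ denotes bounded operators with the operator norm. Let $(\mathbf{kL})=((k_1L_1)^2+\cdots+(k_dL_d)^2)^{1/2}$. For given real $\lambda_0,\lambda_1,\lambda_2$ let $\mu_{\mathbf k}=\lambda_0-\lambda_1(\mathbf{kL})^2+\lambda_2(\mathbf{kL})^4$ and let $\mathcal L$ be the diagonal operator $(\mathcal L\phi)_{\mathbf k}=\mu_{\mathbf k}\phi_{\mathbf k}$ with domain $D(\mathcal L)=\{\phi\in\ell^1_\omega:\mathcal L\phi\in\ell^1_\omega\}$. Fix $q\in\{0,2\}$ and let $(\mathcal Q\phi)_{\mathbf k}=\mathrm i^q(\mathbf{kL})^q\phi_{\mathbf k}$ (a real multiplier since $\mathrm i^2=-1$). $\mathcal N:\ell^1_\omega\to\ell^1_\omega$ is Fréchet differentiable with $\mathcal N(0)=0$, $D\mathcal N(0)=0$. $\Pi^{(\mathbf m)}$ is the projection keeping the entries with $\mathbf k\in F_{\mathbf m}$ and setting the others to $0$; $\phi^{(\mathbf m)}=\Pi^{(\mathbf m)}\phi$, $\phi^{(\infty)}=\phi-\phi^{(\mathbf m)}$. Fix $\tau>0$, $J=(0,\tau]$, $X=C(J;\ell^1_\omega)$ with $\|a\|=\sup_{t\in J}\|a(t)\|_\omega$, and a fixed function $\bar a\in X$ (the approximate solution). $\{U(t,s)\}_{0\le s\le t\le\tau}$ is the evolution operator of the linearized problem $\dot b=\mathcal Lb+\mathcal QD\mathcal N(\bar a(t))b$, $b(s)=\phi$, i.e. $U(t,s)\phi=b(t)$. Let $\mathcal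 S_J=\{(t,s):0<s<t\le\tau\}$. Additional notation: $\bar U^{(\mathbf m)}(t,s)$ is the solution operator (time $s$ to time $t$) of the finite-dimensional linear system $\dot c=\mathcal Lc+\Pi^{(\mathbf m)}\mathcal QD\mathcal N(\bar a(t))c$ on sequences supported in $F_{\mathbf m}$ (extended by $0$ outside $F_{\mathbf m}$), and $\bar U^{(\infty)}(t,s)$ is the solution operator of $\dot c=\mathcal Lc+(I-\Pi^{(\mathbf m)})\mathcal QD\mathcal N(\bar a(t))c$ on sequences vanishing on $F_{\mathbf m}$; both are linear. *)

From HB Require Import structures.
From mathcomp Require Import all_boot all_order all_algebra.
From mathcomp Require Import all_classical all_reals all_analysis.
Set Implicit Arguments. Unset Strict Implicit. Unset Printing Implicit Defensive.
Import Order.TTheory GRing.Theory Num.Theory.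
Import numFieldNormedType.Exports.
Local Open Scope classical_set_scope.
Local Open Scope ring_scope.

Section Defs.
Variables (R : realType) (d : nat).

Definition midx := {ffun 'I_d -> nat}.
Definition rseq := midx -> R.

Definition in_Fm (m k : midx) : bool := [forall i, k i < m i]%N.

Definition mabs (k : midx) : nat := (\sum_(i < d) k i)%N.

Definition alpha (k : midx) : R := \prod_(i < d) (if k i == 0%N then 2 else 1).

Definition omega (nuF : R) (k : midx) : R := alpha k * nuF ^+ mabs k.

(* weighted l^1 norm, valued in the extended reals (+oo iff a is not in l^1_omega) *)
Definition wnorm (nuF : R) (a : rseq) : \bar R :=
  \esum_(k in [set: midx]) (`|a k| * omega nuF k)%:E.

Definition inl1 (nuF : R) (a : rseq) : Prop := (wnorm nuF a < +oo)%E.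

Definition kLsq (L : 'I_d -> R) (k : midx) : R := \sum_(i < d) ((k i)%:R * L i) ^+ 2.

Definition mu (L : 'I_d -> R) (l0 l1 l2 : R) (k : midx) : R :=
  l0 - l1 * kLsq L k + l2 * (kLsq L k) ^+ 2.

(* (Q phi)_k = i^q (kL)^q phi_k, for q in {0,2}: i^q (kL)^q = (-1)^{q/2} ((kL)^2)^{q/2} *)
Definition Qop (L : 'I_d -> R) (q : nat) (phi : rseq) : rseq :=
  fun k => (-1) ^+ q./2 * (kLsq L k) ^+ q./2 * phi k.

Definition Pim (m : midx) (phi : rseq) : rseq :=
  fun k => if in_Fm m k then phi k else 0.
Definition Piinf (m : midx) (phi : rseq) : rseq :=
  fun k => if in_Fm m k then 0 else phi k.

Definition sadd (a b : rseq) : rseq := fun k => a k + b k.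
Definition ssub (a b : rseq) : rseq := fun k => a k - b k.
Definition sscale (c : R) (a : rseq) : rseq := fun k => c * a k.

Definition opnorm (nuF : R) (T : rseq -> rseq) : \bar R :=
  ereal_sup [set wnorm nuF (T x) | x in [set x | (wnorm nuF x <= 1)%E]].

Definition bounded_linear (nuF : R) (T : rseq -> rseq) : Prop :=
  (forall x, inl1 nuF x -> inl1 nuF (T x)) /\
  (forall c x y, inl1 nuF x -> inl1 nuF y ->
     T (sadd (sscale c x) y) = sadd (sscale c (T x)) (T y)) /\
  (exists C : R, forall x, inl1 nuF x -> (wnorm nuF (T x) <= C%:E * wnorm nuF x)%E).

Definition frechet_deriv (nuF : R) (N : rseq -> rseq) (DN : rseq -> rseq -> rseq) : Prop :=
  (forall x, inl1 nuF x -> inl1 nuF (N x)) /\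
  forall x, inl1 nuF x -> bounded_linear nuF (DN x) /\
    forall eps : R, 0 < eps -> exists delta : R, 0 < delta /\
      forall h, inl1 nuF h -> (wnorm nuF h < delta%:E)%E ->
        (wnorm nuF (ssub (ssub (N (sadd x h)) (N x)) (DN x h))
           <= eps%:E * wnorm nuF h)%E.

Definition leb := (@lebesgue_measure R).

(* Bochner integrability on ]s,t[ of an l^1_omega-valued function
   (strong measurability <-> measurability of every coordinate, l^1_omega separable) *)
Definition bochner_integrable (nuF s t : R) (f : R -> rseq) : Prop :=
  (forall k, measurable_fun `]s, t[ (fun r => f r k)) /\
  (\int[leb]_(r in `]s, t[) wnorm nuF (f r) < +oo)%E.

(* Bochner integral of an l^1_omega-valued function, computed coordinatewise *)
Definition vint (s t : R) (f : R -> rseq) : rseq :=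
  fun k => \int[leb]_(r in `]s, t[) f r k.

Definition mxnorm1 (p n : nat) (M : 'M[R]_(p, n)) : R :=
  \big[Num.max/0]_(j < n) \sum_(i < p) `|M i j|.

End Defs.
Arguments leb {R}.

From HB Require Import structures.
From mathcomp Require Import all_boot all_order all_algebra.
From mathcomp Require Import all_classical all_reals all_analysis.
From mathcomp Require Import measurable_realfun.
From mathcomp Require Import lra ring.
Import Order.TTheory GRing.Theory Num.Theory.
Import numFieldNormedType.Exports.
Local Open Scope classical_set_scope.
Local Open Scope ring_scope.
Import HBNNSimple.

(* Write b(t) = U(t,s) Q psi and let x(t), y(t) be the norms of Pi^(m) b(t) and
   (I - Pi^(m)) b(t).  Estimating the two Duhamel formulas of (v) by (i), (ii) and (iv)
   gives the coupled Volterra inequalities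
     x(t) <= W_{m,q} |Pi psi| + W_{m,q} E_{m,oo} int_s^t y(r) dr,
     y(t) <= W(t,s) |(I - Pi) psi| + E_{oo,m} int_s^t W(t,r) x(r) dr.
   Let X and Y be the suprema of (t-s)^gamma x(t) and (t-s)^gamma y(t) over (s,tau],
   finite by (v).  Substituting each inequality into the other and using (iii) gives
   X <= A + (1 - kappa) X and Y <= B + (1 - kappa) Y, where A + B is bounded by the
   column sums of the 2x2 matrix against |Pi psi| and |(I - Pi) psi|, hence by its
   1-norm times |psi|. *)


(* The integrands produced by the evolution operators are not known to be measurable.
   The integral of a nonnegative function is still the supremum of the integrals of the
   simple functions below it, and the following estimates only use that description. *)
Section ge0_integral_nonmeas.
Local Open Scope ereal_scope.
Context d (T : measurableType d) (R : realType) (mu : {measure set T -> \bar R}).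
Implicit Types (D : set T) (f g : T -> \bar R).

Lemma ge0_le_integral_nonmeas D f g : (forall x, D x -> 0 <= f x) ->
  (forall x, D x -> f x <= g x) ->
  \int[mu]_(x in D) f x <= \int[mu]_(x in D) g x.
Proof.
move=> f0 fg.
have g0 x : D x -> 0 <= g x by move=> Dx; exact: le_trans (f0 _ Dx) (fg _ Dx).
rewrite (ge0_integralE mu f0) (ge0_integralE mu g0).
apply: ge_ereal_sup => _ [h hf <-]; apply: ereal_sup_ubound; exists h => // x.
apply: le_trans (hf x) _; rewrite /patch; case: ifPn => // /set_mem Dx; exact: fg.
Qed.

Lemma ge0_integralZl_le_nonmeas D f (k : R) : (0 <= k)%R ->
  (forall x, D x -> 0 <= f x) ->
  \int[mu]_(x in D) (k%:E * f x) <= k%:E * \int[mu]_(x in D) f x.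
Proof.
move=> k0 f0; have [->|kn0] := eqVneq k 0%R.
  by rewrite mul0e; under eq_integral do rewrite mul0e; rewrite integral0.
have kp : (0 < k)%R by rewrite lt0r kn0.
have kf0 x : D x -> 0 <= k%:E * f x by move=> Dx; rewrite mule_ge0// f0.
rewrite (ge0_integralE mu f0) (ge0_integralE mu kf0).
apply: ge_ereal_sup => _ [h hf <-].
have ki0 : (0 <= k^-1)%R by rewrite invr_ge0.
pose h' := scale_nnsfun h ki0.
have -> : sintegral mu h = k%:E * sintegral mu h'.
  rewrite /h' /scale_nnsfun.
  rewrite (_ : sintegral mu (mul_nnsfun _ h) = sintegral mu (cst k^-1 \* h)%R) //.
  by rewrite sintegralrM muleA -EFinM mulfV // mul1e.
rewrite lee_pmul2l// ; apply: ereal_sup_ubound; exists h' => // x.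
have := hf x; rewrite /patch /h' /=; case: ifPn => _ hx.
  by rewrite -(@lee_pmul2l _ k%:E) ?lte_fin// -EFinM mulrA mulfV ?mul1r.
have -> : (point : \bar R) = 0 by [].
have h0 : (h x = 0)%R by apply/eqP; rewrite eq_le -lee_fin hx /= fun_ge0.
by rewrite h0 mulr0.
Qed.

(* Only the finite part needs to be measurable: it is split off the simple
   functions below the sum by a pointwise minimum. *)
Lemma ge0_integralD_le_nonmeas D (a : T -> R) g : measurable D ->
  measurable_fun D a -> (forall x, D x -> (0 <= a x)%R) ->
  (forall x, D x -> 0 <= g x) ->
  \int[mu]_(x in D) ((a x)%:E + g x) <=
    \int[mu]_(x in D) (a x)%:E + \int[mu]_(x in D) g x.
Proof.
move=> mD ma a0 g0.
have ag0 x : D x -> 0 <= (a x)%:E + g x by move=> Dx; rewrite adde_ge0 ?lee_fin ?a0 ?g0.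
rewrite (ge0_integralE mu ag0).
apply: ge_ereal_sup => _ [h hf <-].
pose h1 x := Num.min (h x) (a x).
pose h2 x := (h x - h1 x)%R.
have mh : measurable_fun D h by apply: measurable_funTS.
have mh1 : measurable_fun D h1 by apply: measurable_minr.
have mh2 : measurable_fun D h2 by apply: measurable_funB.
have h_ge0 x : (0 <= h x)%R by apply: fun_ge0.
have -> : sintegral mu h = \int[mu]_(x in D) ((h1 x)%:E + (h2 x)%:E).
  rewrite -integralT_nnsfun [RHS]integral_mkcond; apply: eq_integral => x _.
  rewrite /patch /h2; case: ifPn => Dx; first by rewrite -EFinD addrC subrK.
  have := hf x; rewrite /patch (negbTE Dx) => hx.
  have -> : (point : \bar R) = 0 by [].
  by apply/eqP; rewrite eq_le [0%E <= _]lee_fin h_ge0 andbT; exact: hx.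
have h10 x : D x -> (0 <= h1 x)%R by move=> Dx; rewrite /h1 le_min h_ge0 a0.
have h20 x : D x -> (0 <= h2 x)%R by move=> Dx; rewrite /h2 subr_ge0 /h1 ge_min lexx.
rewrite ge0_integralD//; [|exact/measurable_EFinP|exact/measurable_EFinP].
apply: leeD; apply: ge0_le_integral_nonmeas => x Dx.
- by rewrite lee_fin h10.
- by rewrite lee_fin /h1 ge_min lexx orbT.
- by rewrite lee_fin h20.
have := hf x; rewrite /patch; case: ifPn => [_ hx|]; last by rewrite notin_setE.
rewrite /h2 /h1; case: (leP (h x) (a x)) => hax; first by rewrite subrr g0.
by rewrite EFinB leeBlDl.
Qed.

Lemma le_integral_scale_nonmeas D f g (k : R) : (0 <= k)%R ->
  (forall x, D x -> 0 <= f x) -> (forall x, D x -> 0 <= g x) ->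
  (forall x, D x -> f x <= k%:E * g x) ->
  \int[mu]_(x in D) f x <= k%:E * \int[mu]_(x in D) g x.
Proof.
move=> k0 f0 g0 fg.
apply: le_trans (ge0_le_integral_nonmeas _ _ (fun x => k%:E * g x) f0 fg) _.
exact: ge0_integralZl_le_nonmeas.
Qed.

Lemma le_integral_affine_nonmeas D f (a : T -> R) g (c k : R) : measurable D ->
  measurable_fun D a -> (0 <= c)%R -> (0 <= k)%R ->
  (forall x, D x -> (0 <= a x)%R) -> (forall x, D x -> 0 <= g x) ->
  (forall x, D x -> 0 <= f x) -> (forall x, D x -> f x <= (c * a x)%:E + k%:E * g x) ->
  \int[mu]_(x in D) f x <=
    c%:E * \int[mu]_(x in D) (a x)%:E + k%:E * \int[mu]_(x in D) g x.
Proof.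
move=> mD ma c0 k0 a0 g0 f0 fle.
have ca0 x : D x -> (0 <= c * a x)%R by move=> Dx; rewrite mulr_ge0 ?a0.
have kg0 x : D x -> 0 <= k%:E * g x by move=> Dx; rewrite mule_ge0 ?lee_fin ?g0.
apply: le_trans
  (ge0_le_integral_nonmeas _ _ (fun x => (c * a x)%:E + k%:E * g x) f0 fle) _.
apply: le_trans (ge0_integralD_le_nonmeas
  _ (fun x => c * a x)%R (fun x => k%:E * g x) mD _ ca0 kg0) _.
  exact: measurable_funM.
apply: leeD; last exact: ge0_integralZl_le_nonmeas.
under eq_integral do rewrite EFinM.
by apply: ge0_integralZl_le_nonmeas => // x Dx; rewrite lee_fin a0.
Qed.

End ge0_integral_nonmeas.

Lemma abs_fine_le {R : realType} (x : \bar R) : (`|fine x|%:E <= `|x|)%E.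
Proof. by case: x => [r| |] //=; rewrite normr0 ?leey ?lee_fin. Qed.

Section weighted_l1.
Context {R : realType} {d : nat} {nuF : R}.
Hypothesis nuF_ge1 : 1 <= nuF.
Local Notation rs := (rseq R d).
Local Notation wn := (wnorm nuF).
Implicit Types (a b : rs) (k : midx d).

Lemma omega_gt0 k : 0 < omega nuF k.
Proof.
rewrite /omega mulr_gt0//; first by apply: prodr_gt0 => i _; case: ifP.
by apply: exprn_gt0; apply: lt_le_trans nuF_ge1.
Qed.

Lemma omega_ge0 k : 0 <= omega nuF k.
Proof. exact/ltW/omega_gt0. Qed.

Lemma wnorm_coef_ge0 a k : (0 <= (`|a k| * omega nuF k)%:E)%E.
Proof. by rewrite lee_fin mulr_ge0 ?omega_ge0. Qed.

Lemma wnorm_ge0 a : (0 <= wn a)%E.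
Proof. by apply: esum_ge0 => k _; exact: wnorm_coef_ge0. Qed.

Lemma wnorm_coef_le a k : ((`|a k| * omega nuF k)%:E <= wn a)%E.
Proof.
apply: esum_ge; exists [set k]; first by split => //; exact: finite_set1.
by rewrite fsbig_set1.
Qed.

Lemma wnorm_le a b : (forall k, `|a k| <= `|b k|) -> (wn a <= wn b)%E.
Proof.
by move=> ab; apply: le_esum => k _; rewrite lee_fin ler_wpM2r ?omega_ge0.
Qed.

Lemma wnormD_le a b : (wn (sadd a b) <= wn a + wn b)%E.
Proof.
rewrite /wnorm -esumD; [|by move=> k _; exact: wnorm_coef_ge0..].
apply: le_esum => k _; rewrite -EFinD lee_fin -mulrDl ler_wpM2r ?omega_ge0//.
exact: ler_normD.
Qed.

Lemma wnormZ_le c a : (wn (sscale c a) <= `|c|%:E * wn a)%E.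
Proof.
rewrite {1}/wnorm; apply: ge_ereal_sup => _ [F [finF _] <-].
rewrite (eq_fsbigr (fun k => (`|c|%:E * (`|a k| * omega nuF k)%:E)%E)); last first.
  by move=> k _; rewrite -EFinM /sscale normrM -mulrA.
rewrite -(@ge0_mule_fsumr _ _ `|c|%:E (fun k => (`|a k| * omega nuF k)%:E) F);
  last by move=> k; exact: wnorm_coef_ge0.
by rewrite lee_wpmul2l ?lee_fin//; apply: ereal_sup_ubound; exists F.
Qed.

Lemma wnorm_eq0 a : wn a = 0%E -> a = (fun _ => 0).
Proof.
move=> a0; apply/funext => k; have := wnorm_coef_le a k.
rewrite a0 lee_fin pmulr_lle0 ?omega_gt0// => ak0.
by apply/eqP; rewrite -normr_eq0 eq_le ak0 normr_ge0.
Qed.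

Lemma wnorm_split m a : (wn (Pim m a) + wn (Piinf m a) = wn a)%E.
Proof.
rewrite /wnorm -esumD; [|by move=> k _; exact: wnorm_coef_ge0..].
apply: eq_esum => k _; rewrite -EFinD -mulrDl /Pim /Piinf.
by case: ifP; rewrite normr0 ?addr0 ?add0r.
Qed.

Lemma wnorm_Pim_le m a : (wn (Pim m a) <= wn a)%E.
Proof. by apply: wnorm_le => k; rewrite /Pim; case: ifP; rewrite ?normr0. Qed.

Lemma wnorm_Piinf_le m a : (wn (Piinf m a) <= wn a)%E.
Proof. by apply: wnorm_le => k; rewrite /Piinf; case: ifP; rewrite ?normr0. Qed.

Lemma wnorm0 : wn (fun _ : midx d => 0) = 0%E.
Proof. by rewrite /wnorm esum1// => k _; rewrite normr0 mul0r. Qed.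

Lemma inl1_0 : inl1 nuF (fun _ : midx d => 0 : R).
Proof. by rewrite /inl1 wnorm0 ltey. Qed.

Lemma inl1_wnormE a : inl1 nuF a -> wn a = (fine (wn a))%:E.
Proof. by move=> a_l1; rewrite fineK// ge0_fin_numE//; exact: wnorm_ge0. Qed.

Lemma inl1_le a b : (wn a <= wn b)%E -> inl1 nuF b -> inl1 nuF a.
Proof. by move=> ab; rewrite /inl1; apply: le_lt_trans. Qed.

Lemma inl1_Pim m a : inl1 nuF a -> inl1 nuF (Pim m a).
Proof. by apply: inl1_le; exact: wnorm_Pim_le. Qed.

Lemma inl1_Piinf m a : inl1 nuF a -> inl1 nuF (Piinf m a).
Proof. by apply: inl1_le; exact: wnorm_Piinf_le. Qed.

Lemma wnorm_split_fine m a : inl1 nuF a ->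
  wn a = (fine (wn (Pim m a)) + fine (wn (Piinf m a)))%:E.
Proof.
move=> a_l1; rewrite EFinD -(inl1_wnormE _ (inl1_Pim m _ a_l1)).
by rewrite -(inl1_wnormE _ (inl1_Piinf m _ a_l1)) wnorm_split.
Qed.

Lemma wnorm_vint (s t : R) (f : R -> rs) :
  (forall k, measurable_fun `]s, t[ (fun r => f r k)) ->
  (wn (vint s t f) <= \int[leb]_(r in `]s, t[) wn (f r))%E.
Proof.
move=> mf; rewrite {1}/wnorm; apply: ge_ereal_sup => _ [F [finF _] <-].
have mD : measurable (`]s, t[ : set R) by exact: measurable_itv.
apply: (@le_trans _ _ (\sum_(k \in F)
   \int[leb]_(r in `]s, t[) (`|f r k| * omega nuF k)%:E)%E).
  apply: lee_fsum => // k _.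
  under eq_integral => r _ do rewrite mulrC EFinM (_ : (`|f r k|)%:E = `|(f r k)%:E|%E)//.
  rewrite ge0_integralZl_EFin; last 4 first.
  - exact: mD.
  - by move=> r _; exact: abse_ge0.
  - exact: measurableT_comp (@abse_measurable R setT) ((measurable_EFinP _ _).2 (mf k)).
  - exact: omega_ge0.
  rewrite EFinM muleC lee_wpmul2l ?lee_fin ?omega_ge0//.
  apply: le_trans (abs_fine_le _) _; apply: le_abse_integral => //.
  exact: (measurable_EFinP _ _).2 (mf k).
have mg k : measurable_fun `]s, t[ (fun r => (`|f r k| * omega nuF k)%:E).
  by apply/measurable_EFinP; apply: measurable_funM => //; exact: measurableT_comp.
rewrite -ge0_integral_fsum//; last by move=> k r _; exact: wnorm_coef_ge0.
apply: ge0_le_integral_nonmeas => r _.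
  by apply: fsume_ge0 => k _; exact: wnorm_coef_ge0.
by apply: ereal_sup_ubound; exists F.
Qed.

Lemma linear_map0 (T : rs -> rs) :
  (forall c a b, inl1 nuF a -> inl1 nuF b ->
     T (sadd (sscale c a) b) = sadd (sscale c (T a)) (T b)) ->
  T (fun _ => 0) = (fun _ => 0).
Proof.
move=> T_lin; have := T_lin 1 _ _ inl1_0 inl1_0.
have -> : sadd (sscale 1 (fun _ : midx d => 0 : R)) (fun _ => 0) = (fun _ => 0 : R).
  by apply/funext => k; rewrite /sadd /sscale mulr0 addr0.
move=> T0; apply/funext => k.
have := congr1 (fun f => f k) T0; rewrite /sadd /sscale mul1r; lra.
Qed.

Lemma linear_mapZ (T : rs -> rs) :
  (forall c a b, inl1 nuF a -> inl1 nuF b ->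
     T (sadd (sscale c a) b) = sadd (sscale c (T a)) (T b)) ->
  forall c a, inl1 nuF a -> T (sscale c a) = sscale c (T a).
Proof.
move=> T_lin c a a_l1; have := T_lin c _ _ a_l1 inl1_0; rewrite (linear_map0 _ T_lin).
have -> : sadd (sscale c a) (fun _ => 0) = sscale c a.
  by apply/funext => k; rewrite /sadd addr0.
by move=> ->; apply/funext => k; rewrite /sadd addr0.
Qed.

(* Homogeneity is all that is needed: rescale [a] to the unit ball. *)
Lemma opnorm_le (T : rs -> rs) (E : R) a :
  (forall c b, inl1 nuF b -> T (sscale c b) = sscale c (T b)) ->
  (opnorm nuF T <= E%:E)%E -> 0 <= E -> inl1 nuF a ->
  (wn (T a) <= E%:E * wn a)%E.
Proof.
move=> TZ TE E0 a_l1.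
have [a0|an0] := eqVneq (wn a) 0%E.
  have -> : a = sscale 0 a.
    by rewrite (wnorm_eq0 _ a0); apply/funext => k; rewrite /sscale mul0r.
  rewrite TZ// (le_trans (wnormZ_le _ _))// normr0 mul0e.
  by rewrite mule_ge0 ?lee_fin// wnorm_ge0.
set c := fine (wn a).
have ac : wn a = c%:E by exact: inl1_wnormE.
have c0 : 0 < c.
  by rewrite lt0r -lee_fin -ac wnorm_ge0 andbT; apply: contra an0; rewrite ac => /eqP ->.
have unit_a : (wn (sscale c^-1 a) <= 1)%E.
  apply: le_trans (wnormZ_le _ _) _.
  by rewrite ac -EFinM ger0_norm ?invr_ge0 ?(ltW c0)// mulVf ?gt_eqF.
have -> : T a = sscale c (T (sscale c^-1 a)).
  by rewrite TZ//; apply/funext => k; rewrite /sscale mulrA mulfV ?gt_eqF// mul1r.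
apply: le_trans (wnormZ_le _ _) _.
rewrite ac ger0_norm ?(ltW c0)// muleC lee_wpmul2r ?lee_fin ?(ltW c0)//.
by apply: le_trans TE; apply: ereal_sup_ubound; exists (sscale c^-1 a).
Qed.

End weighted_l1.

Section projections.
Context {R : realType} {d : nat} (m : midx d).
Implicit Types (a : rseq R d).

Lemma Pim_Qop L q a : Pim m (Qop L q a) = Qop L q (Pim m a).
Proof. by apply/funext => k; rewrite /Pim /Qop; case: ifP; rewrite ?mulr0. Qed.

Lemma Piinf_Qop L q a : Piinf m (Qop L q a) = Qop L q (Piinf m a).
Proof. by apply/funext => k; rewrite /Piinf /Qop; case: ifP; rewrite ?mulr0. Qed.

Lemma Pim_id a : Pim m (Pim m a) = Pim m a.
Proof. by apply/funext => k; rewrite /Pim; case: (in_Fm m k). Qed.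

Lemma Piinf_id a : Piinf m (Piinf m a) = Piinf m a.
Proof. by apply/funext => k; rewrite /Piinf; case: (in_Fm m k). Qed.

Lemma PimZ c a : Pim m (sscale c a) = sscale c (Pim m a).
Proof. by apply/funext => k; rewrite /Pim /sscale; case: ifP; rewrite ?mulr0. Qed.

Lemma PiinfZ c a : Piinf m (sscale c a) = sscale c (Piinf m a).
Proof. by apply/funext => k; rewrite /Piinf /sscale; case: ifP; rewrite ?mulr0. Qed.

End projections.

Lemma fine_pmule_le {R : realType} {g B : R} {x : \bar R} : 0 < g -> (0 <= x)%E ->
  (g%:E * x <= B%:E)%E -> x = (fine x)%:E /\ g * fine x <= B.
Proof.
case: x => [r| |] //= g0 _ gxB; exfalso.
by move: gxB; rewrite muleC gt0_mulye ?lte_fin// leye_eq.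
Qed.

Lemma pmule_affine_le {R : realType} {g v a b c A B : R} {IA IB : \bar R} :
  0 < g -> 0 <= b -> 0 <= c -> (0 <= IA)%E -> (0 <= IB)%E ->
  (g%:E * IA <= A%:E)%E -> (g%:E * IB <= B%:E)%E ->
  (v%:E <= a%:E + (b%:E * IA + c%:E * IB))%E ->
  g * v <= g * a + b * A + c * B.
Proof.
move=> g0 b0 c0 IA0 IB0 /(fine_pmule_le g0 IA0)[IAE gA]
  /(fine_pmule_le g0 IB0)[IBE gB].
rewrite IAE IBE -!EFinM -!EFinD lee_fin => v_le.
have := ler_wpM2l (ltW g0) v_le; have := fine_ge0 IA0; have := fine_ge0 IB0.
nra.
Qed.

Lemma lee_pmul_affine {R : realType} {c u a b : R} {I : \bar R} :
  0 <= c -> 0 <= a -> 0 <= b -> (0 <= I)%E ->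
  (u%:E <= a%:E + b%:E * I)%E -> ((c * u)%:E <= (c * a)%:E + (c * b)%:E * I)%E.
Proof.
move=> c0 a0 b0 I0 u_le; rewrite EFinM; apply: le_trans (lee_wpmul2l _ u_le) _.
  by rewrite lee_fin.
by rewrite ge0_muleDr ?mule_ge0 ?lee_fin// muleA -!EFinM.
Qed.

Lemma measurable_simplex (R : realType) (tau : R) :
  measurable [set p : R * R | 0 < p.2 < p.1 /\ p.1 <= tau].
Proof.
have -> : [set p : R * R | 0 < p.2 < p.1 /\ p.1 <= tau] =
   (snd @^-1` `]0, +oo[) `&` ((fun p : R * R => p.1 - p.2) @^-1` `]0, +oo[)
   `&` (fst @^-1` `]-oo, tau]).
  apply/seteqP; split => [[x y]|[x y]] /=; rewrite !in_itv /= ?andbT ?subr_gt0.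
    by move=> [/andP[-> ->] ->].
  by move=> [[-> ->] ->].
apply: measurableI; first apply: measurableI.
- by rewrite -[X in measurable X]setTI; apply: measurable_snd => //; exact: measurable_itv.
- rewrite -[X in measurable X]setTI.
  by apply: (measurable_funB measurable_fst measurable_snd) => //; exact: measurable_itv.
- by rewrite -[X in measurable X]setTI; apply: measurable_fst => //; exact: measurable_itv.
Qed.

Lemma measurable_simplex_sections {R : realType} {W : R -> R -> R} {tau : R} :
  measurable_fun [set p : R * R | 0 < p.2 < p.1 /\ p.1 <= tau] (fun p => W p.1 p.2) ->
  (forall s t, 0 < s -> t <= tau -> measurable_fun `]s, t[ (W ^~ s)) /\
  (forall s t, 0 < s -> t <= tau -> measurable_fun `]s, t[ (W t)).
Proof.
move=> mW; split => s t s0 t_tau.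
  have : measurable_fun `]s, t[ ((fun p : R * R => W p.1 p.2) \o pair^~ s).
    apply: (measurable_comp _ _ mW); [exact: measurable_simplex| |exact: measurable_funTS].
    move=> _ [r + <-]; rewrite /= in_itv /= => /andP[sr rt].
    by rewrite s0 sr /=; split => //; apply: ltW; apply: lt_le_trans t_tau.
  exact.
have : measurable_fun `]s, t[ ((fun p : R * R => W p.1 p.2) \o pair t).
  apply: (measurable_comp _ _ mW); [exact: measurable_simplex| |exact: measurable_funTS].
  move=> _ [r + <-]; rewrite /= in_itv /= => /andP[sr rt].
  by rewrite (lt_trans s0 sr) rt /=.
exact.
Qed.

Lemma mxnorm1_2x2_ge {R : realType} {a b c e u v : R} : 0 <= u -> 0 <= v ->
  (a + c) * u + (b + e) * v <=
  mxnorm1 (\matrix_(i < 2, j < 2) nth 0 (nth [::] [:: [:: a; b]; [:: c; e]] i) j) * (u + v).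
Proof.
move=> u0 v0; rewrite /mxnorm1 !big_ord_recl !big_ord0 !mxE /= !addr0 mulrDr.
have ac := lerD (ler_norm a) (ler_norm c); have be := lerD (ler_norm b) (ler_norm e).
by apply: lerD; apply: ler_wpM2r => //; rewrite !le_max ?ac ?be ?orbT.
Qed.

Section weighted_sup.
Context {R : realType} {s tau gamma : R}.

Definition wsup (z : R -> R) : R :=
  sup [set (r - s) `^ gamma * z r | r in [set r | s < r <= tau]].

Context {z : R -> R} {C : R}.
Hypothesis z_bounded : forall r, s < r <= tau -> (r - s) `^ gamma * z r <= C.

Lemma wsup_ub {r} : s < r <= tau -> (r - s) `^ gamma * z r <= wsup z.
Proof.
move=> hr; apply: sup_upper_bound; last by exists r.
split; first by exists ((r - s) `^ gamma * z r), r.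
by exists C => _ [r' hr' <-]; exact: z_bounded.
Qed.

Lemma le_wsup_powRN {r} : s < r <= tau -> z r <= wsup z * (r - s) `^ (- gamma).
Proof.
move=> /[dup] hr /andP[sr _].
have g0 : 0 < (r - s) `^ gamma by apply: powR_gt0; rewrite subr_gt0.
by rewrite powRN ler_pdivlMr // mulrC; exact: wsup_ub.
Qed.

Lemma wsup_ge0 : s < tau -> (forall r, 0 <= z r) -> 0 <= wsup z.
Proof.
move=> s_tau z0; have tau_in : s < tau <= tau by rewrite s_tau lexx.
exact: le_trans (mulr_ge0 (powR_ge0 _ _) (z0 tau)) (wsup_ub tau_in).
Qed.

End weighted_sup.
Arguments wsup {R} s tau gamma z.

Lemma wsup_le {R : realType} {s tau gamma B : R} {z : R -> R} : s < tau ->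
  (forall r, s < r <= tau -> (r - s) `^ gamma * z r <= B) -> wsup s tau gamma z <= B.
Proof.
move=> s_tau zB; rewrite /wsup; apply: ge_sup; last by move=> _ [r hr <-]; exact: zB.
by exists ((tau - s) `^ gamma * z tau), tau => //=; rewrite s_tau lexx.
Qed.

(* x and y stand for the norms of the two parts of U(t,s) Q psi, x0 and y0 for those
   of psi. *)
Section coupled_volterra.
Context {R : realType} {tau gamma s : R} {W : R -> R -> R}.
Context {Wmq Winfq Wbar Wbbar Emi Eim x0 y0 C : R} {x y : R -> R}.
Hypotheses (s_gt0 : 0 < s) (s_lt_tau : s < tau) (gamma_ge0 : 0 <= gamma).
Hypotheses (Wmq_ge0 : 0 <= Wmq) (Emi_ge0 : 0 <= Emi) (Eim_ge0 : 0 <= Eim).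
Hypotheses (x0_ge0 : 0 <= x0) (y0_ge0 : 0 <= y0).
Hypotheses (x_ge0 : forall r, 0 <= x r) (y_ge0 : forall r, 0 <= y r).
Hypothesis W_ge0 : forall t s, 0 < s < t -> t <= tau -> 0 <= W t s.
Hypothesis W_meas : measurable_fun [set p : R * R | 0 < p.2 < p.1 /\ p.1 <= tau]
  (fun p : R * R => W p.1 p.2).
Hypothesis W_sing : forall t s, 0 < s < t -> t <= tau -> (t - s) `^ gamma * W t s <= Winfq.
Hypothesis W_int1 : forall t s, 0 < s < t -> t <= tau ->
  (((t - s) `^ gamma)%:E * \int[leb]_(r in `]s, t[) (W r s)%:E <= Wbar%:E)%E.
Hypothesis W_int2 : forall t s, 0 < s < t -> t <= tau ->
  (((t - s) `^ gamma)%:E * \int[leb]_(r in `]s, t[) (W t r)%:E <= Wbar%:E)%E.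
Hypothesis W_int3 : forall t s, 0 < s < t -> t <= tau ->
  (((t - s) `^ gamma)%:E *
     \int[leb]_(r in `]s, t[) \int[leb]_(sg in `]s, r[)
        (W r sg * (sg - s) `^ (- gamma))%:E <= Wbbar%:E)%E.
Hypothesis W_int4 : forall t s, 0 < s < t -> t <= tau ->
  (((t - s) `^ gamma)%:E *
     \int[leb]_(r in `]s, t[) ((W t r)%:E *
        \int[leb]_(sg in `]s, r[) ((sg - s) `^ (- gamma))%:E) <= Wbbar%:E)%E.
Hypothesis xy_bounded : forall r, s < r <= tau -> (r - s) `^ gamma * (x r + y r) <= C.
Hypothesis x_le : forall t, s < t <= tau ->
  ((x t)%:E <= (Wmq * x0)%:E + \int[leb]_(r in `]s, t[) (Wmq * Emi * y r)%:E)%E.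
Hypothesis y_le : forall t, s < t <= tau ->
  ((y t)%:E <= (W t s * y0)%:E + \int[leb]_(r in `]s, t[) (W t r * Eim * x r)%:E)%E.

Let x_bounded r : s < r <= tau -> (r - s) `^ gamma * x r <= C.
Proof.
move=> hr; apply: le_trans _ (xy_bounded _ hr).
by rewrite ler_wpM2l ?powR_ge0 // lerDl.
Qed.

Let y_bounded r : s < r <= tau -> (r - s) `^ gamma * y r <= C.
Proof.
move=> hr; apply: le_trans _ (xy_bounded _ hr).
by rewrite ler_wpM2l ?powR_ge0 // lerDr.
Qed.

Let X := wsup s tau gamma x.
Let Y := wsup s tau gamma y.

Let X_ge0 : 0 <= X. Proof. exact: wsup_ge0 x_bounded s_lt_tau x_ge0. Qed.
Let Y_ge0 : 0 <= Y. Proof. exact: wsup_ge0 y_bounded s_lt_tau y_ge0. Qed.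

Let powR_le_tau t : s < t <= tau -> (t - s) `^ gamma <= tau `^ gamma.
Proof.
move=> /andP[st t_tau]; apply: ge0_ler_powR; rewrite ?nnegrE ?subr_ge0 ?(ltW st)//.
  exact: ltW (lt_trans s_gt0 s_lt_tau).
by rewrite lerBlDr ler_wpDr // ltW.
Qed.

Let in_itv_tau {t r} : t <= tau -> r \in `]s, t[ -> s < r <= tau /\ 0 < r < t.
Proof.
rewrite in_itv /= => t_tau /andP[sr rt].
by rewrite sr (lt_trans s_gt0 sr) rt (ltW (lt_le_trans rt t_tau)).
Qed.

Lemma y_le_wsup r : s < r <= tau ->
  ((y r)%:E <= (W r s * y0)%:E +
     (Eim * X)%:E * \int[leb]_(sg in `]s, r[) (W r sg * (sg - s) `^ (- gamma))%:E)%E.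
Proof.
move=> /[dup] hr /andP[_ r_tau]; apply: le_trans (y_le _ hr) _; apply: leeD2l.
apply: le_integral_scale_nonmeas; first exact: mulr_ge0.
- move=> sg /(in_itv_tau r_tau)[_ hsg].
  by rewrite lee_fin !mulr_ge0 ?W_ge0.
- move=> sg /(in_itv_tau r_tau)[_ hsg].
  by rewrite lee_fin mulr_ge0 ?powR_ge0 ?W_ge0.
move=> sg /(in_itv_tau r_tau)[hsg' hsg]; rewrite -EFinM lee_fin.
rewrite [rhs in _ <= rhs](_ : _ = W r sg * Eim * (X * (sg - s) `^ (- gamma))); last by ring.
by rewrite ler_wpM2l ?mulr_ge0 ?W_ge0 ?(le_wsup_powRN x_bounded).
Qed.

Lemma x_le_wsup r : s < r <= tau ->
  ((x r)%:E <= (Wmq * x0)%:E +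
     (Wmq * Emi * Y)%:E * \int[leb]_(sg in `]s, r[) ((sg - s) `^ (- gamma))%:E)%E.
Proof.
move=> /[dup] hr /andP[_ r_tau]; apply: le_trans (x_le _ hr) _; apply: leeD2l.
apply: le_integral_scale_nonmeas; first by rewrite !mulr_ge0.
- by move=> sg _; rewrite lee_fin !mulr_ge0.
- by move=> sg _; rewrite lee_fin powR_ge0.
move=> sg /(in_itv_tau r_tau)[hsg' _]; rewrite -EFinM lee_fin -!mulrA.
by do 2 apply: ler_wpM2l => //; have := le_wsup_powRN y_bounded hsg'.
Qed.

Lemma weighted_x_le t : s < t <= tau ->
  (t - s) `^ gamma * x t <=
    tau `^ gamma * Wmq * x0 + Wmq * Emi * y0 * Wbar + Wmq * Emi * Eim * X * Wbbar.
Proof.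
move=> /[dup] ht /andP[st t_tau]; have st' : 0 < s < t by rewrite s_gt0.
pose I r := (\int[leb]_(sg in `]s, r[) (W r sg * (sg - s) `^ (- gamma))%:E)%E.
have I_ge0 r : r <= tau -> (0 <= I r)%E.
  move=> r_tau; apply: integral_ge0 => sg /(in_itv_tau r_tau)[_ hsg].
  by rewrite lee_fin mulr_ge0 ?powR_ge0 ?W_ge0.
have x_affine : ((x t)%:E <= (Wmq * x0)%:E +
    ((Wmq * Emi * y0)%:E * \int[leb]_(r in `]s, t[) (W r s)%:E +
     (Wmq * Emi * Eim * X)%:E * \int[leb]_(r in `]s, t[) I r))%E.
  apply: le_trans (x_le _ ht) _; apply: leeD2l.
  apply: le_integral_affine_nonmeas; rewrite ?mulr_ge0//.
  - exact: (measurable_simplex_sections W_meas).1 _ _ s_gt0 t_tau.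
  - by move=> r /(in_itv_tau t_tau)[/andP[sr r_tau] _]; rewrite W_ge0 // s_gt0 sr.
  - by move=> r /(in_itv_tau t_tau)[/andP[_ r_tau] _]; exact: I_ge0.
  - by move=> r _; rewrite lee_fin !mulr_ge0.
  move=> r /(in_itv_tau t_tau)[/[dup] hr /andP[sr r_tau] _].
  have hsr : 0 < s < r by rewrite s_gt0 sr.
  have := lee_pmul_affine (mulr_ge0 Wmq_ge0 Emi_ge0)
    (mulr_ge0 (W_ge0 _ _ hsr r_tau) y0_ge0) (mulr_ge0 Eim_ge0 X_ge0) (I_ge0 _ r_tau)
    (y_le_wsup _ hr).
  by rewrite (mulrC (W r s)) !mulrA.
have g0 : 0 < (t - s) `^ gamma by apply: powR_gt0; rewrite subr_gt0.
apply: le_trans (pmule_affine_le g0 _ _ _ _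
  (W_int1 _ _ st' t_tau) (W_int3 _ _ st' t_tau) x_affine) _; rewrite ?mulr_ge0//.
- apply: integral_ge0 => r /(in_itv_tau t_tau)[/andP[sr r_tau] _].
  by rewrite lee_fin W_ge0 // s_gt0 sr.
- by apply: integral_ge0 => r /(in_itv_tau t_tau)[/andP[_ r_tau] _]; exact: I_ge0.
by rewrite -!addrA lerD2r mulrA !ler_wpM2r ?powR_le_tau.
Qed.

Lemma weighted_y_le t : s < t <= tau ->
  (t - s) `^ gamma * y t <=
    Winfq * y0 + Eim * Wmq * x0 * Wbar + Eim * Wmq * Emi * Y * Wbbar.
Proof.
move=> /[dup] ht /andP[st t_tau]; have st' : 0 < s < t by rewrite s_gt0.
pose J r := (\int[leb]_(sg in `]s, r[) ((sg - s) `^ (- gamma))%:E)%E.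
have J_ge0 r : (0 <= J r)%E.
  by apply: integral_ge0 => sg _; rewrite lee_fin powR_ge0.
have y_affine : ((y t)%:E <= (W t s * y0)%:E +
    ((Eim * Wmq * x0)%:E * \int[leb]_(r in `]s, t[) (W t r)%:E +
     (Eim * Wmq * Emi * Y)%:E * \int[leb]_(r in `]s, t[) ((W t r)%:E * J r)))%E.
  apply: le_trans (y_le _ ht) _; apply: leeD2l.
  apply: le_integral_affine_nonmeas; rewrite ?mulr_ge0//.
  - exact: (measurable_simplex_sections W_meas).2 _ _ s_gt0 t_tau.
  - by move=> r /(in_itv_tau t_tau)[_ hr]; rewrite W_ge0.
  - by move=> r /(in_itv_tau t_tau)[_ hr]; rewrite mule_ge0 ?lee_fin ?W_ge0.
  - by move=> r /(in_itv_tau t_tau)[_ hr]; rewrite lee_fin !mulr_ge0 ?W_ge0.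
  move=> r /(in_itv_tau t_tau)[hr' hr].
  have := lee_pmul_affine (mulr_ge0 (W_ge0 _ _ hr t_tau) Eim_ge0)
    (mulr_ge0 Wmq_ge0 x0_ge0) (mulr_ge0 (mulr_ge0 Wmq_ge0 Emi_ge0) Y_ge0) (J_ge0 r)
    (x_le_wsup _ hr').
  have -> : W t r * Eim * (Wmq * x0) = Eim * Wmq * x0 * W t r by ring.
  have -> : W t r * Eim * (Wmq * Emi * Y) = Eim * Wmq * Emi * Y * W t r by ring.
  by rewrite muleA -EFinM.
have g0 : 0 < (t - s) `^ gamma by apply: powR_gt0; rewrite subr_gt0.
apply: le_trans (pmule_affine_le g0 _ _ _ _
  (W_int2 _ _ st' t_tau) (W_int4 _ _ st' t_tau) y_affine) _; rewrite ?mulr_ge0//.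
- by apply: integral_ge0 => r /(in_itv_tau t_tau)[_ hr]; rewrite lee_fin W_ge0.
- apply: integral_ge0 => r /(in_itv_tau t_tau)[_ hr].
  by rewrite mule_ge0 ?lee_fin ?W_ge0 ?J_ge0.
by rewrite -!addrA lerD2r mulrA ler_wpM2r ?W_sing.
Qed.

Lemma coupled_volterra_bound t : 0 < 1 - Wmq * Wbbar * Emi * Eim -> s < t <= tau ->
  (t - s) `^ gamma * (x t + y t) <=
  (1 - Wmq * Wbbar * Emi * Eim)^-1 * mxnorm1 (\matrix_(i < 2, j < 2)
     nth 0 (nth [::] [:: [:: tau `^ gamma * Wmq; Wmq * Wbar * Emi];
                         [:: Wmq * Wbar * Eim; Winfq]] i) j) * (x0 + y0).
Proof.
move=> kappa_gt0 ht.
have X_le := wsup_le s_lt_tau weighted_x_le.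
have Y_le := wsup_le s_lt_tau weighted_y_le.
have XY : (t - s) `^ gamma * (x t + y t) <= X + Y.
  by rewrite mulrDr; exact (lerD (wsup_ub x_bounded ht) (wsup_ub y_bounded ht)).
rewrite -mulrA ler_pdivlMl //; apply: le_trans (mxnorm1_2x2_ge x0_ge0 y0_ge0).
have := ler_wpM2l (ltW kappa_gt0) XY; move: X_le Y_le; rewrite -/X -/Y.
nra.
Qed.

End coupled_volterra.

Section duhamel_parts.
Context {R : realType} {d : nat} {L : 'I_d -> R} {nuF : R} {q : nat} {tau : R}.
Context {DN : rseq R d -> rseq R d -> rseq R d} {abar : R -> rseq R d}.
Context {Ubm Ubi : R -> R -> rseq R d -> rseq R d} {m : midx d} {W : R -> R -> R}.
Context {Wmq Emi Eim : R}.
Hypotheses (nuF_ge1 : 1 <= nuF) (Wmq_ge0 : 0 <= Wmq) (Emi_ge0 : 0 <= Emi) (Eim_ge0 : 0 <= Eim).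
Hypothesis DN_linear : forall r, 0 < r <= tau -> bounded_linear nuF (DN (abar r)).
Hypothesis Ubm_bound : forall t s psi, 0 < s < t -> t <= tau -> inl1 nuF psi ->
  (wnorm nuF (Ubm t s (Qop L q (Pim m psi))) <= Wmq%:E * wnorm nuF (Pim m psi))%E.
Hypothesis W_ge0 : forall t s, 0 < s < t -> t <= tau -> 0 <= W t s.
Hypothesis Ubi_bound : forall t s psi, 0 < s < t -> t <= tau -> inl1 nuF psi ->
  (wnorm nuF (Ubi t s (Qop L q (Piinf m psi))) <= (W t s)%:E * wnorm nuF (Piinf m psi))%E.
Hypothesis DN_mi : forall t, 0 < t <= tau ->
  (opnorm nuF (fun phi => Pim m (DN (abar t) (Piinf m phi))) <= Emi%:E)%E.
Hypothesis DN_im : forall t, 0 < t <= tau ->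
  (opnorm nuF (fun phi => Piinf m (DN (abar t) (Pim m phi))) <= Eim%:E)%E.
Local Notation wn := (wnorm nuF).

Let DNZ r c a : 0 < r <= tau -> inl1 nuF a ->
  DN (abar r) (sscale c a) = sscale c (DN (abar r) a).
Proof. by move=> hr; exact: linear_mapZ _ (DN_linear _ hr).2.1 c a. Qed.

Lemma wnorm_Pim_DN_Piinf r a : 0 < r <= tau -> inl1 nuF a ->
  (wn (Pim m (DN (abar r) (Piinf m a))) <= Emi%:E * wn (Piinf m a))%E.
Proof.
move=> hr a_l1; rewrite -{1}(Piinf_id m a).
apply: (opnorm_le nuF_ge1 (fun phi => Pim m (DN (abar r) (Piinf m phi)))) => //.
- move=> c b b_l1 /=; rewrite PiinfZ DNZ ?PimZ //; exact: inl1_Piinf.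
- exact: DN_mi.
- exact: inl1_Piinf.
Qed.

Lemma wnorm_Piinf_DN_Pim r a : 0 < r <= tau -> inl1 nuF a ->
  (wn (Piinf m (DN (abar r) (Pim m a))) <= Eim%:E * wn (Pim m a))%E.
Proof.
move=> hr a_l1; rewrite -{1}(Pim_id m a).
apply: (opnorm_le nuF_ge1 (fun phi => Piinf m (DN (abar r) (Pim m phi)))) => //.
- move=> c b b_l1 /=; rewrite PimZ DNZ ?PiinfZ //; exact: inl1_Pim.
- exact: DN_im.
- exact: inl1_Pim.
Qed.

Lemma wnorm_Ubm_DN t r a : 0 < r < t -> t <= tau -> inl1 nuF a ->
  (wn (Ubm t r (Pim m (Qop L q (DN (abar r) (Piinf m a))))) <=
    (Wmq * Emi)%:E * wn (Piinf m a))%E.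
Proof.
move=> /[dup] hrt /andP[r0 rt] t_tau a_l1.
have hr : 0 < r <= tau by rewrite r0 (ltW (lt_le_trans rt t_tau)).
have DN_l1 := (DN_linear _ hr).1 _ (inl1_Piinf nuF_ge1 m _ a_l1).
rewrite Pim_Qop; apply: le_trans (Ubm_bound _ _ _ hrt t_tau DN_l1) _.
by rewrite EFinM -muleA lee_wpmul2l ?lee_fin //; exact: wnorm_Pim_DN_Piinf.
Qed.

Lemma wnorm_Ubi_DN t r a : 0 < r < t -> t <= tau -> inl1 nuF a ->
  (wn (Ubi t r (Piinf m (Qop L q (DN (abar r) (Pim m a))))) <=
    (W t r * Eim)%:E * wn (Pim m a))%E.
Proof.
move=> /[dup] hrt /andP[r0 rt] t_tau a_l1.
have hr : 0 < r <= tau by rewrite r0 (ltW (lt_le_trans rt t_tau)).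
have DN_l1 := (DN_linear _ hr).1 _ (inl1_Pim nuF_ge1 m _ a_l1).
rewrite Piinf_Qop; apply: le_trans (Ubi_bound _ _ _ hrt t_tau DN_l1) _.
by rewrite EFinM -muleA lee_wpmul2l ?lee_fin ?W_ge0 //; exact: wnorm_Piinf_DN_Pim.
Qed.

Lemma Pim_duhamel_le {s t psi} {b : R -> rseq R d} :
  0 < s -> s < t <= tau -> inl1 nuF psi ->
  (forall r, s < r <= tau -> inl1 nuF (b r)) ->
  (forall k, measurable_fun `]s, t[
     (fun r => Ubm t r (Pim m (Qop L q (DN (abar r) (Piinf m (b r))))) k)) ->
  Pim m (b t) = sadd (Ubm t s (Qop L q (Pim m psi)))
     (vint s t (fun r => Ubm t r (Pim m (Qop L q (DN (abar r) (Piinf m (b r))))))) ->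
  ((fine (wn (Pim m (b t))))%:E <= (Wmq * fine (wn (Pim m psi)))%:E +
     \int[leb]_(r in `]s, t[) (Wmq * Emi * fine (wn (Piinf m (b r))))%:E)%E.
Proof.
move=> s0 /[dup] ht /andP[st t_tau] psi_l1 b_l1 mf bE.
rewrite -(inl1_wnormE nuF_ge1 _ (inl1_Pim nuF_ge1 m _ (b_l1 _ ht))).
rewrite EFinM -(inl1_wnormE nuF_ge1 _ (inl1_Pim nuF_ge1 m _ psi_l1)) bE.
apply: le_trans (wnormD_le nuF_ge1 _ _) _; apply: leeD.
  by apply: Ubm_bound; rewrite ?s0.
apply: le_trans (wnorm_vint nuF_ge1 _ _ _ mf) _.
apply: ge0_le_integral_nonmeas => [r _|r]; first exact: wnorm_ge0.
rewrite /= in_itv /= => /andP[sr rt].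
have br_l1 : inl1 nuF (b r) by apply: b_l1; rewrite sr (ltW (lt_le_trans rt t_tau)).
rewrite EFinM -(inl1_wnormE nuF_ge1 _ (inl1_Piinf nuF_ge1 m _ br_l1)).
by apply: wnorm_Ubm_DN; rewrite ?(lt_trans s0 sr).
Qed.

Lemma Piinf_duhamel_le {s t psi} {b : R -> rseq R d} :
  0 < s -> s < t <= tau -> inl1 nuF psi ->
  (forall r, s < r <= tau -> inl1 nuF (b r)) ->
  (forall k, measurable_fun `]s, t[
     (fun r => Ubi t r (Piinf m (Qop L q (DN (abar r) (Pim m (b r))))) k)) ->
  Piinf m (b t) = sadd (Ubi t s (Qop L q (Piinf m psi)))
     (vint s t (fun r => Ubi t r (Piinf m (Qop L q (DN (abar r) (Pim m (b r))))))) ->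
  ((fine (wn (Piinf m (b t))))%:E <= (W t s * fine (wn (Piinf m psi)))%:E +
     \int[leb]_(r in `]s, t[) (W t r * Eim * fine (wn (Pim m (b r))))%:E)%E.
Proof.
move=> s0 /[dup] ht /andP[st t_tau] psi_l1 b_l1 mf bE.
rewrite -(inl1_wnormE nuF_ge1 _ (inl1_Piinf nuF_ge1 m _ (b_l1 _ ht))).
rewrite EFinM -(inl1_wnormE nuF_ge1 _ (inl1_Piinf nuF_ge1 m _ psi_l1)) bE.
apply: le_trans (wnormD_le nuF_ge1 _ _) _; apply: leeD.
  by apply: Ubi_bound; rewrite ?s0.
apply: le_trans (wnorm_vint nuF_ge1 _ _ _ mf) _.
apply: ge0_le_integral_nonmeas => [r _|r]; first exact: wnorm_ge0.
rewrite /= in_itv /= => /andP[sr rt].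
have br_l1 : inl1 nuF (b r) by apply: b_l1; rewrite sr (ltW (lt_le_trans rt t_tau)).
rewrite EFinM -(inl1_wnormE nuF_ge1 _ (inl1_Pim nuF_ge1 m _ br_l1)).
by apply: wnorm_Ubi_DN; rewrite ?(lt_trans s0 sr).
Qed.

End duhamel_parts.

Theorem mainTheorem1
  (R : realType) (d : nat) (L : 'I_d -> R) (nuF : R)
  (l0 l1 l2 : R) (q : nat) (tau : R)
  (N : rseq R d -> rseq R d) (DN : rseq R d -> rseq R d -> rseq R d)
  (abar : R -> rseq R d)
  (U Ubm Ubi : R -> R -> rseq R d -> rseq R d)
  (m : midx d) (gamma : R)
  (W : R -> R -> R) (Wmq Winfq Wbar Wbbar Emi Eim : R)
  (hd : (1 <= d)%N) (hL : forall i, 0 < L i) (hnu : 1 <= nuF)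
  (hq : q = 0%N \/ q = 2%N) (htau : 0 < tau)
  (hN : frechet_deriv nuF N DN) (hN0 : N (fun _ => 0) = (fun _ => 0))
  (hDN0 : forall h, inl1 nuF h -> DN (fun _ => 0) h = (fun _ => 0))
  (habar_l1 : forall t, 0 < t <= tau -> inl1 nuF (abar t))
  (habar_cont : forall t0, 0 < t0 <= tau -> forall eps : R, 0 < eps ->
      exists delta : R, 0 < delta /\ forall t, 0 < t <= tau -> `|t - t0| < delta ->
        (wnorm nuF (ssub (abar t) (abar t0)) < eps%:E)%E)
  (habar_bd : exists C : R, forall t, 0 < t <= tau -> (wnorm nuF (abar t) <= C%:E)%E)
  (hmu : forall k, ~~ in_Fm m k -> mu L l0 l1 l2 k < 0)
  (hmustar : exists k0, ~~ in_Fm m k0 /\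
      forall k, ~~ in_Fm m k -> mu L l0 l1 l2 k <= mu L l0 l1 l2 k0)
  (hgamma : 0 <= gamma < 1) (hgamma2 : q = 2%N -> 0 < gamma)
  (hWmq : 0 < Wmq)
  (hi : forall t s psi, 0 < s < t -> t <= tau -> inl1 nuF psi ->
      (wnorm nuF (Ubm t s (Qop L q (Pim m psi))) <= Wmq%:E * wnorm nuF (Pim m psi))%E)
  (hW0 : forall t s, 0 < s < t -> t <= tau -> 0 <= W t s)
  (hWmeas : measurable_fun [set p : R * R | 0 < p.2 < p.1 /\ p.1 <= tau]
              (fun p : R * R => W p.1 p.2))
  (hii : forall t s psi, 0 < s < t -> t <= tau -> inl1 nuF psi ->
      (wnorm nuF (Ubi t s (Qop L q (Piinf m psi))) <= (W t s)%:E * wnorm nuF (Piinf m psi))%E)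
  (hWinfq : 0 < Winfq) (hWbar : 0 <= Wbar) (hWbbar : 0 <= Wbbar)
  (hiii1 : forall t s, 0 < s < t -> t <= tau -> (t - s) `^ gamma * W t s <= Winfq)
  (hiii2a : forall t s, 0 < s < t -> t <= tau ->
      (((t - s) `^ gamma)%:E * \int[leb]_(r in `]s, t[) (W r s)%:E <= Wbar%:E)%E)
  (hiii2b : forall t s, 0 < s < t -> t <= tau ->
      (((t - s) `^ gamma)%:E * \int[leb]_(r in `]s, t[) (W t r)%:E <= Wbar%:E)%E)
  (hiii3a : forall t s, 0 < s < t -> t <= tau ->
      (((t - s) `^ gamma)%:E *
         \int[leb]_(r in `]s, t[) \int[leb]_(sg in `]s, r[)
            (W r sg * (sg - s) `^ (- gamma))%:E <= Wbbar%:E)%E)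
  (hiii3b : forall t s, 0 < s < t -> t <= tau ->
      (((t - s) `^ gamma)%:E *
         \int[leb]_(r in `]s, t[) ((W t r)%:E *
            \int[leb]_(sg in `]s, r[) ((sg - s) `^ (- gamma))%:E) <= Wbbar%:E)%E)
  (hEmi : 0 <= Emi) (hEim : 0 <= Eim)
  (hiv1 : forall t, 0 < t <= tau ->
      (opnorm nuF (fun phi => Pim m (DN (abar t) (Piinf m phi))) <= Emi%:E)%E)
  (hiv2 : forall t, 0 < t <= tau ->
      (opnorm nuF (fun phi => Piinf m (DN (abar t) (Pim m phi))) <= Eim%:E)%E)
  (hv : forall s psi, 0 <= s < tau -> inl1 nuF psi ->
      let b := fun t => U t s (Qop L q psi) in
      (forall t, s < t <= tau -> inl1 nuF (b t)) /\
      (forall t0, s < t0 <= tau -> forall eps : R, 0 < eps ->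
         exists delta : R, 0 < delta /\ forall t, s < t <= tau -> `|t - t0| < delta ->
           (wnorm nuF (ssub (b t) (b t0)) < eps%:E)%E) /\
      (exists C : R, forall t, s < t <= tau ->
         (((t - s) `^ gamma)%:E * wnorm nuF (b t) <= C%:E)%E) /\
      (forall t, s < t <= tau ->
         let fm := fun r => Ubm t r (Pim m (Qop L q (DN (abar r) (Piinf m (b r))))) in
         let fi := fun r => Ubi t r (Piinf m (Qop L q (DN (abar r) (Pim m (b r))))) in
         bochner_integrable nuF s t fm /\ bochner_integrable nuF s t fi /\
         Pim m (b t) = sadd (Ubm t s (Qop L q (Pim m psi))) (vint s t fm) /\
         Piinf m (b t) = sadd (Ubi t s (Qop L q (Piinf m psi))) (vint s t fi)))
  (hkappa : 0 < 1 - Wmq * Wbbar * Emi * Eim) :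
  let kappa := 1 - Wmq * Wbbar * Emi * Eim in
  let Wq := kappa^-1 * mxnorm1 (\matrix_(i < 2, j < 2)
              nth 0 (nth [::] [:: [:: tau `^ gamma * Wmq; Wmq * Wbar * Emi];
                                  [:: Wmq * Wbar * Eim; Winfq]] i) j) in
  forall t s psi, 0 < s < t -> t <= tau -> inl1 nuF psi ->
    (((t - s) `^ gamma)%:E * wnorm nuF (U t s (Qop L q psi)) <= Wq%:E * wnorm nuF psi)%E.
Proof.
move=> kappa Wq t s psi /andP[s_gt0 st] t_tau psi_l1.
have s_tau : s < tau := lt_le_trans st t_tau.
have s_range : 0 <= s < tau by rewrite (ltW s_gt0) s_tau.
have /andP[gamma_ge0 _] := hgamma.
have [b_l1 [_ [[C bC] b_duhamel]]] := hv s psi s_range psi_l1.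
pose b r := U r s (Qop L q psi).
pose x r := fine (wnorm nuF (Pim m (b r))).
pose y r := fine (wnorm nuF (Piinf m (b r))).
have bE r : s < r <= tau -> wnorm nuF (b r) = (x r + y r)%:E.
  by move=> hr; exact (wnorm_split_fine hnu m _ (b_l1 r hr)).
have DN_lin r : 0 < r <= tau -> bounded_linear nuF (DN (abar r)).
  by move=> hr; exact: (hN.2 _ (habar_l1 r hr)).1.
have fine_wnorm_ge0 a : 0 <= fine (wnorm nuF a) by exact: fine_ge0 (wnorm_ge0 hnu a).
rewrite (bE t) ?st// (wnorm_split_fine hnu m _ psi_l1) -!EFinM lee_fin.
apply: (coupled_volterra_bound (C := C) s_gt0 s_tau gamma_ge0 (ltW hWmq) hEmi hEim _ _ _ _
  hW0 hWmeas hiii1 hiii2a hiii2b hiii3a hiii3b _ _ _ t hkappa).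
all: rewrite ?st ?fine_wnorm_ge0//; try by move=> r; exact: fine_wnorm_ge0.
- by move=> r hr; rewrite -lee_fin EFinM -bE //; exact: bC.
- move=> r hr; have [[mfm _] [_ [bm _]]] := b_duhamel r hr.
  exact (Pim_duhamel_le hnu (ltW hWmq) hEmi DN_lin hi hiv1 s_gt0 hr psi_l1 b_l1 mfm bm).
move=> r hr; have [_ [[mfi _] [_ bi]]] := b_duhamel r hr.
exact (Piinf_duhamel_le hnu hEim DN_lin hW0 hii hiv2 s_gt0 hr psi_l1 b_l1 mfi bi).
Qed.
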